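(* Let $\Delta=\Delta_1+\cdots+\Delta_r\subseteq M_{\mathbb R}$ be a proper centered nef-partition of a reflexive polytope $\Delta$. Call a nonempty subset $I\subseteq\{1,\dots,r\}$ irreducible if $\Delta^I:=\sum_{i\in I}\Delta_i$ contains $0$ in its relative interior and $I$ is minimal (with respect to inclusion) with this property. Then any two distinct irreducible subsets of $\{1,\dots,r\}$ are disjoint.
   Context: $M\cong\mathbb Z^d$, $N$ dual lattice. A reflexive polytope $\Delta\subseteq M_{\mathbb R}$ is a lattice polytope with $0$ in its interior whose polar $\{y:\langle x,y\rangle\ge-1\ \forall x\in\Delta\}$ is a lattice polytope. A centered nef-partition of $\Delta$ is a decomposition $\Delta=\Delta_1+\cdots+\Delta_r$ into lattice polytopes with $0\in\Delta_i$ for all $i$; it is proper if $\dim\Delta_i>0$ for all $i$. *)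

(* M = Z^d inside M_R = R^d (row vectors), N = Z^d with the
   standard pairing <x,y> = \sum_i x_i y_i. R is an arbitrary realType
   (a model of the real numbers). *)
From HB Require Import structures.
From mathcomp Require Import all_boot all_order all_algebra.
From mathcomp Require Import reals.
Set Implicit Arguments. Unset Strict Implicit. Unset Printing Implicit Defensive.
Import Order.TTheory GRing.Theory Num.Theory.
Local Open Scope ring_scope.

Section Defs.
Variables (R : realType) (d : nat).
Notation pt := 'rV[R]_d.

Definition pairing (x y : pt) : R := \sum_(i < d) x 0 i * y 0 i.

Definition lattice_pt (x : pt) : Prop := forall i, x 0 i \is a Num.int.

Definition conv (S : seq pt) : pt -> Prop := fun x =>
  exists w : 'I_(size S) -> R,
    (forall k, 0 <= w k) /\ \sum_k w k = 1 /\
    x = \sum_k w k *: nth 0 S k.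

Definition lattice_polytope (P : pt -> Prop) : Prop :=
  exists S : seq pt, (forall v, v \in S -> lattice_pt v) /\
                     (forall x, P x <-> conv S x).

Definition aff_hull (P : pt -> Prop) : pt -> Prop := fun x =>
  exists (S : seq pt) (w : 'I_(size S) -> R),
    (forall v, v \in S -> P v) /\ \sum_k w k = 1 /\
    x = \sum_k w k *: nth 0 S k.

Definition near_pt (e : R) (x y : pt) : Prop := forall i, `|x 0 i - y 0 i| < e.

Definition interior (P : pt -> Prop) : pt -> Prop := fun x =>
  exists2 e : R, 0 < e & forall y, near_pt e x y -> P y.

Definition rel_interior (P : pt -> Prop) : pt -> Prop := fun x =>
  P x /\ exists2 e : R, 0 < e &
    forall y, aff_hull P y -> near_pt e x y -> P y.

Definition polar (P : pt -> Prop) : pt -> Prop := fun y =>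
  forall x, P x -> - 1 <= pairing x y.

Definition reflexive (P : pt -> Prop) : Prop :=
  lattice_polytope P /\ interior P 0 /\ lattice_polytope (polar P).

(* Minkowski sum of the family (D i)_{i in I}; equals {0} for I empty *)
Definition mink_sum (r : nat) (D : 'I_r -> pt -> Prop) (I : {set 'I_r}) :
  pt -> Prop := fun x =>
  exists f : 'I_r -> pt, (forall i, i \in I -> D i (f i)) /\
                         x = \sum_(i in I) f i.

Definition proper_centered_nef_partition (Delta : pt -> Prop) (r : nat)
  (D : 'I_r -> pt -> Prop) : Prop :=
  reflexive Delta /\
  (forall i, lattice_polytope (D i)) /\
  (forall x, Delta x <-> mink_sum D [set: 'I_r] x) /\
  (forall i, D i 0) /\
  (* dim Delta_i > 0: Delta_i contains two distinct points *)
  (forall i, exists x y, D i x /\ D i y /\ x <> y).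

Definition has_zero_relint (r : nat) (D : 'I_r -> pt -> Prop)
  (I : {set 'I_r}) : Prop := rel_interior (mink_sum D I) 0.

Definition irreducible (r : nat) (D : 'I_r -> pt -> Prop) (I : {set 'I_r}) :
  Prop :=
  I != set0 /\ has_zero_relint D I /\
  (forall J : {set 'I_r}, J != set0 -> J \proper I -> ~ has_zero_relint D J).

End Defs.

From HB Require Import structures.
From mathcomp Require Import all_boot all_order all_algebra.
From mathcomp Require Import reals.
From mathcomp Require Import lra.
Set Implicit Arguments. Unset Strict Implicit. Unset Printing Implicit Defensive.
Import Order.TTheory GRing.Theory Num.Theory.
Local Open Scope ring_scope.

(* Suppose 0 lies in the relative interiors of Delta^I and Delta^J.  A point y
   of Delta^I close to 0 in the affine hull of Delta^(I :&: J) splits as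
   y = s + w with s in Delta^(I :&: J) and w in Delta^(I :\: J).  A lattice
   point v of the polar of Delta is negative on at most one Delta_i, since the
   two integral values it would take there add up to at most -2.  If v is
   negative on some summand of w, it is nonnegative on every Delta_j with j in
   J, hence vanishes on Delta^J, which has 0 in its relative interior; then
   <w, v> = <y, v> - <s, v> = 0.  Otherwise <w, v> >= 0 termwise.  So w is
   nonnegative on all vertices of the polar polytope, which contains a small
   negative multiple of w: hence w = 0 and 0 is in the relative interior of
   Delta^(I :&: J).  Minimality of irreducible sets then forbids I :&: J to be
   a nonempty proper subset of I or of J. *)

Section Polytopes.
Variables (R : realType) (d : nat).
Notation pt := 'rV[R]_d.
Implicit Types (x y z u v w : pt) (P : pt -> Prop).

Lemma pairingC x y : pairing x y = pairing y x.
Proof. by apply: eq_bigr => i _; rewrite mulrC. Qed.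

Lemma pairingDl x y z : pairing (x + y) z = pairing x z + pairing y z.
Proof. by rewrite /pairing -big_split; apply: eq_bigr => i _; rewrite mxE mulrDl. Qed.

Lemma pairingZl a x z : pairing (a *: x) z = a * pairing x z.
Proof. by rewrite /pairing mulr_sumr; apply: eq_bigr => i _; rewrite mxE mulrA. Qed.

Lemma pairingBl x y z : pairing (x - y) z = pairing x z - pairing y z.
Proof. by rewrite pairingDl -scaleN1r pairingZl mulN1r. Qed.

Lemma pairing_suml (I : Type) (s : seq I) (p : pred I) (F : I -> pt) z :
  pairing (\sum_(i <- s | p i) F i) z = \sum_(i <- s | p i) pairing (F i) z.
Proof.
have pairing0l : pairing 0 z = 0.
  by rewrite /pairing big1 // => i _; rewrite mxE mul0r.
exact: (big_morph (fun x => pairing x z) (fun x y => pairingDl x y z) pairing0l).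
Qed.

Lemma pairing_lincomb (S : seq pt) (l : 'I_(size S) -> R) z :
  pairing (\sum_k l k *: nth 0 S k) z = \sum_k l k * pairing (nth 0 S k) z.
Proof. by rewrite pairing_suml; apply: eq_bigr => k _; rewrite pairingZl. Qed.

Lemma pairing_self_gt0 w : w != 0 -> 0 < pairing w w.
Proof.
move=> w0; have sq_ge0 (i : 'I_d) : true -> 0 <= w 0 i * w 0 i.
  by rewrite -expr2 sqr_ge0.
rewrite lt_def (sumr_ge0 _ sq_ge0) andbT; apply: contraNneq w0 => ww0.
apply/eqP/matrixP => a i; rewrite (ord1 a) !mxE.
have /eqP := @psumr_eq0P _ _ _ _ sq_ge0 ww0 i erefl.
by rewrite mulf_eq0 orbb => /eqP.
Qed.

Lemma lattice_pairing_int x y :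
  lattice_pt x -> lattice_pt y -> pairing x y \is a Num.int.
Proof. by move=> hx hy; apply: rpred_sum => i _; apply: rpredM. Qed.

Lemma intr_lt0_leN1 (a : R) : a \is a Num.int -> a < 0 -> a <= -1.
Proof.
move=> a_int a_lt0; have := norm_intr_ge1 a_int (ltr0_neq0 a_lt0).
by rewrite ltr0_norm // lerNr.
Qed.

Lemma conv_nth (S : seq pt) (k : 'I_(size S)) : conv S (nth 0 S k).
Proof.
exists (fun j => (j == k)%:R); split=> [j|]; first exact: ler0n.
split; rewrite (bigD1 k) //= eqxx ?scale1r big1 ?addr0 // => j /negbTE ->.
  by [].
by rewrite scale0r.
Qed.

Lemma lattice_polytope_pairing_leN1 P x v :
  lattice_polytope P -> P x -> lattice_pt v -> pairing x v < 0 ->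
  exists2 s, P s & pairing s v <= -1.
Proof.
case=> S [S_lat hP] /hP [l [l_ge0 [_ ->]]] v_lat; rewrite pairing_lincomb => lt0.
have /existsP [k k_lt0] : [exists k : 'I_(size S), pairing (nth 0 S k) v < 0].
  apply: contraTT lt0 => /existsPn all_ge0.
  rewrite -leNgt; apply: sumr_ge0 => k _.
  by apply: mulr_ge0 => //; rewrite leNgt all_ge0.
exists (nth 0 S k); first by apply/hP; apply: conv_nth.
by apply: intr_lt0_leN1 k_lt0; apply: lattice_pairing_int v_lat;
  apply/S_lat/mem_nth.
Qed.

Lemma lattice_polytope_polar_scale P u :
  lattice_polytope P -> exists2 t : R, 0 < t & polar P (t *: u).
Proof.
case=> S [_ hP].
set B := \sum_(k < size S) `|pairing (nth 0 S k) u|.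
have B_ge0 : 0 <= B by apply: sumr_ge0 => k _; exact: normr_ge0.
have B1_gt0 : 0 < 1 + B by rewrite ltr_wpDr.
exists (1 + B)^-1 => [|x /hP [l [l_ge0 [l_sum1 ->]]]]; first by rewrite invr_gt0.
have tB : (1 + B)^-1 * (1 + B) = 1 by rewrite mulVf // gt_eqF.
have t_gt0 : 0 < (1 + B)^-1 by rewrite invr_gt0.
rewrite pairingC pairingZl pairingC pairing_lincomb.
have : - B <= \sum_k l k * pairing (nth 0 S k) u.
  rewrite -[- B]mul1r -l_sum1 mulr_suml; apply: ler_sum => k _.
  apply/ler_wpM2l/lerNnormlW => //; rewrite /B (bigD1 k) //= lerDl.
  by apply: sumr_ge0 => j _; exact: normr_ge0.
move/(ler_wpM2l (ltW t_gt0)); apply: le_trans.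
rewrite mulrN lerNr opprK -[X in _ <= X]tB.
by apply: ler_wpM2l; [exact: ltW | rewrite lerDr].
Qed.

Lemma polar_pairing_ge0_eq0 P w :
  lattice_polytope P -> lattice_polytope (polar P) ->
  (forall v, lattice_pt v -> polar P v -> 0 <= pairing w v) -> w = 0.
Proof.
move=> P_lat [V [V_lat hV]] w_ge0; apply/eqP/contraT.
move/pairing_self_gt0 => ww_gt0.
have [t t_gt0 /hV [l [l_ge0 [_ hwt]]]] := lattice_polytope_polar_scale (- w) P_lat.
have : 0 <= pairing w (t *: - w).
  rewrite hwt pairingC pairing_lincomb; apply: sumr_ge0 => k _.
  rewrite pairingC mulr_ge0 // w_ge0 //; last by apply/hV; exact: conv_nth.
  exact/V_lat/mem_nth.
rewrite pairingC pairingZl -scaleN1r pairingZl mulN1r mulrN oppr_ge0.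
by rewrite pmulr_rle0 // leNgt ww_gt0.
Qed.

Lemma aff_hull_sub P Q y :
  (forall x, P x -> Q x) -> aff_hull P y -> aff_hull Q y.
Proof. by move=> PQ [S [l [hS hl]]]; exists S, l; split=> // v /hS /PQ. Qed.

Lemma aff_hull_pairing_eq0 P v y :
  (forall x, P x -> pairing x v = 0) -> aff_hull P y -> pairing y v = 0.
Proof.
move=> P_eq0 [S [l [hS [_ ->]]]]; rewrite pairing_lincomb big1 // => k _.
by rewrite P_eq0 ?mulr0 //; exact/hS/mem_nth.
Qed.

(* [- t *: x] is an affine combination of x and 0; t = e / (1 + sum_j |x_j|)
   keeps it in the sup-norm e-ball around 0. *)
Lemma rel_interior0_opp_scale P x :
  rel_interior P 0 -> P x -> exists2 t : R, 0 < t & P ((- t) *: x).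
Proof.
move=> [P0 [e e_gt0 he]] Px.
set M := 1 + \sum_j `|x 0 j|.
have M_gt0 : 0 < M by rewrite ltr_wpDr // sumr_ge0 // => j _; exact: normr_ge0.
exists (e / M); first by rewrite divr_gt0.
apply: he => [|i].
  exists [:: x; 0], (fun k : 'I_2 => if k == ord0 then - (e / M) else 1 + e / M).
  split; first by move=> u; rewrite !inE => /orP [] /eqP ->.
  rewrite !big_ord_recl !big_ord0 /= scaler0 !addr0; split=> //; lra.
have xi_le : `|x 0 i| <= \sum_j `|x 0 j|.
  by rewrite (bigD1 i) //= lerDl sumr_ge0 // => j _; exact: normr_ge0.
rewrite !mxE sub0r normrN normrM normrN (gtr0_norm (divr_gt0 e_gt0 M_gt0)).
rewrite mulrAC ltr_pdivrMr // ltr_pM2l // /M; lra.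
Qed.

Section MinkowskiSum.
Variables (r : nat) (D : 'I_r -> pt -> Prop).
Implicit Types (I J K : {set 'I_r}).

Lemma mink_sum0 K : (forall i, D i 0) -> mink_sum D K 0.
Proof. by move=> D0; exists (fun _ => 0); split=> [i _|]; rewrite ?big1. Qed.

Lemma mink_sum_subset K I x :
  (forall i, D i 0) -> K \subset I -> mink_sum D K x -> mink_sum D I x.
Proof.
move=> D0 KI [f [hf ->]].
exists (fun i => if i \in K then f i else 0); split=> [i _|].
  by case: ifP => // /hf.
rewrite [RHS](big_setID K) /= (setIidPr KI) [X in _ = _ + X]big1 ?addr0.
  by apply: eq_bigr => i ->.
by move=> i /setDP [_ /negbTE ->].
Qed.

Lemma mink_sum_pairing_ge0 I v x :
  (forall i, i \in I -> forall y, D i y -> 0 <= pairing y v) ->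
  mink_sum D I x -> 0 <= pairing x v.
Proof.
move=> D_ge0 [f [hf ->]]; rewrite pairing_suml; apply: sumr_ge0 => i hi.
exact: D_ge0 _ hi _ (hf _ hi).
Qed.

Lemma has_zero_relint_pairing_eq0 J v :
  has_zero_relint D J ->
  (forall j, j \in J -> forall x, D j x -> 0 <= pairing x v) ->
  forall x, mink_sum D J x -> pairing x v = 0.
Proof.
move=> J0 D_ge0 x hx; have x_ge0 := mink_sum_pairing_ge0 D_ge0 hx.
have [t t_gt0 htx] := rel_interior0_opp_scale J0 hx.
have := mink_sum_pairing_ge0 D_ge0 htx.
rewrite pairingZl mulNr oppr_ge0 pmulr_rle0 // => x_le0.
by apply/eqP; rewrite eq_le x_ge0 x_le0.
Qed.

End MinkowskiSum.
End Polytopes.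

Section NefPartition.
Variables (R : realType) (d r : nat).
Variables (Delta : 'rV[R]_d -> Prop) (D : 'I_r -> 'rV[R]_d -> Prop).
Hypotheses (Delta_lat : lattice_polytope Delta)
  (polar_lat : lattice_polytope (polar Delta))
  (D_lat : forall i, lattice_polytope (D i))
  (Delta_sum : forall x, Delta x <-> mink_sum D [set: 'I_r] x)
  (D0 : forall i, D i 0).
Implicit Types (I J : {set 'I_r}).

Lemma nef_pairing_lt0_unique v j0 j1 x0 x1 :
  lattice_pt v -> polar Delta v -> D j0 x0 -> D j1 x1 ->
  pairing x0 v < 0 -> pairing x1 v < 0 -> j0 = j1.
Proof.
move=> v_lat v_pol h0 h1 lt0 lt1; apply/eqP/contraT => j01.
have [s0 hs0 le0] := lattice_polytope_pairing_leN1 (D_lat j0) h0 v_lat lt0.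
have [s1 hs1 le1] := lattice_polytope_pairing_leN1 (D_lat j1) h1 v_lat lt1.
suff /v_pol : Delta (s0 + s1) by rewrite pairingDl; lra.
apply/Delta_sum; exists (fun i => if i == j0 then s0 else if i == j1 then s1 else 0).
split=> [i _|]; first by do 2![case: eqP => [->|_] //].
rewrite (bigD1 j0) // eqxx (bigD1 j1) /=; last by rewrite inE eq_sym.
rewrite eq_sym (negbTE j01) eqxx big1 ?addr0 // => i /andP [/andP [_ /negbTE ->]].
by move/negbTE ->.
Qed.

Lemma nef_remainder_pairing_ge0 I J (a : 'I_r -> 'rV[R]_d) v :
  has_zero_relint D J -> (forall i, i \in I -> D i (a i)) ->
  aff_hull (mink_sum D (I :&: J)) (\sum_(i in I) a i) ->
  lattice_pt v -> polar Delta v ->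
  0 <= pairing (\sum_(i in I :\: J) a i) v.
Proof.
move=> J0 ha hy v_lat v_pol.
have [/exists_inP [j0 /setDP [j0I j0J] a_lt0] | /exists_inPn a_ge0] :=
  boolP [exists j in I :\: J, pairing (a j) v < 0]; last first.
  by rewrite pairing_suml; apply: sumr_ge0 => j hj; rewrite leNgt a_ge0.
have DJ_ge0 j : j \in J -> forall x, D j x -> 0 <= pairing x v.
  move=> jJ x hx; rewrite leNgt; apply/negP => x_lt0.
  have j0j := nef_pairing_lt0_unique v_lat v_pol (ha _ j0I) hx a_lt0 x_lt0.
  by move: j0J; rewrite j0j jJ.
have IJ_eq0 x : mink_sum D (I :&: J) x -> pairing x v = 0.
  move/(mink_sum_subset D0 (subsetIr I J)).
  exact: has_zero_relint_pairing_eq0 J0 DJ_ge0 x.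
rewrite -(_ : \sum_(i in I) a i - \sum_(i in I :&: J) a i =
              \sum_(i in I :\: J) a i); last first.
  by rewrite (big_setID J) /= addrAC subrr add0r.
rewrite pairingBl (aff_hull_pairing_eq0 IJ_eq0 hy) IJ_eq0 ?subrr //.
by exists a; split=> // i /setIP [/ha].
Qed.

Lemma has_zero_relint_setI I J :
  has_zero_relint D I -> has_zero_relint D J -> has_zero_relint D (I :&: J).
Proof.
move=> [_ [e e_gt0 hI]] J0; split; first exact: mink_sum0.
exists e => // y hy ye.
have [a [ha hya]] : mink_sum D I y.
  apply: hI ye; apply: aff_hull_sub hy => x.
  exact: mink_sum_subset D0 (subsetIl I J).
subst y; rewrite (big_setID J) /=.
have -> : \sum_(i in I :\: J) a i = 0.
  exact: polar_pairing_ge0_eq0 Delta_lat polar_lat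
    (fun v => nef_remainder_pairing_ge0 J0 ha hy).
by rewrite addr0; exists a; split=> // i /setIP [/ha].
Qed.

End NefPartition.

Theorem proposition6p12 (R : realType) (d r : nat)
  (Delta : 'rV[R]_d -> Prop) (D : 'I_r -> 'rV[R]_d -> Prop) :
  proper_centered_nef_partition Delta D ->
  forall I J : {set 'I_r},
    irreducible D I -> irreducible D J -> I != J -> [disjoint I & J].
Proof.
move=> [[Delta_lat [_ polar_lat]] [D_lat [Delta_sum [D0 _]]]] I J
  [_ [I0 I_min]] [_ [J0 J_min]] IJ.
rewrite -setI_eq0; apply/negPn/negP => IJ_nz.
have IJ0 := has_zero_relint_setI Delta_lat polar_lat D_lat Delta_sum D0 I0 J0.
have [ltI | ] := boolP ((I :&: J) \proper I); first exact: I_min _ IJ_nz ltI IJ0.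
rewrite properE subsetIl /= negbK subsetI subxx /= => sIJ.
apply: J_min _ IJ_nz _ IJ0.
by rewrite (setIidPl sIJ) properEneq IJ sIJ.
Qed.
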